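(* Let $n \geq 1$ be an integer and consider Nim on the hypercube $Q_{2n+1}$ in which every edge has weight $1$, with the playing piece $\Delta$ starting at the vertex $\emptyset$. Then the first player $P_1$ has a winning strategy.
   Context: Nim on a graph: two players agree on a finite simple undirected graph $G$ whose edges carry positive integer weights, and a starting vertex on which a playing piece $\Delta$ is placed. Players $P_1$ (who moves first) and $P_2$ alternate. On a turn, the player chooses an edge of positive weight incident with the vertex currently holding $\Delta$, lowers that edge's weight by a positive integer amount, and moves $\Delta$ to the other endpoint of that edge. Edges of weight $0$ are no longer playable. A player who cannot move (no playable edge is incident with $\Delta$) loses. With unit weight, each edge can be traversed at most once in total. The hypercube $Q_m$ has as vertices the subsets $X \subseteq \{1,\dots,m\}$, two vertices being adjacent iff they differ in exactly one element; $\emptyset$ denotes the empty set (by vertex-transitivity the choice of starting vertex is immaterial). *)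

From mathcomp Require Import all_boot.
Set Implicit Arguments. Unset Strict Implicit. Unset Printing Implicit Defensive.

(* The graph has vertex type T : finType and adjacency
   relation adj (intended symmetric, irreflexive).  Edges are identified with
   the unordered pairs [set u; v]; a weighting is a finite function from
   2-subsets to nat (only values on edges matter). *)

Definition weighting (T : finType) := {ffun {set T} -> nat}.

Definition position (T : finType) := (weighting T * T)%type.

Definition nim_move (T : finType) (adj : rel T) (p q : position T) : Prop :=
  let: (w, v) := p in
  let: (w', u) := q in
  [/\ adj v u,
      w' [set v; u] < w [set v; u] &
      forall f : {set T}, f != [set v; u] -> w' f = w f].

Inductive Win (T : finType) (adj : rel T) : position T -> Prop :=
  | WinMove p q : nim_move adj p q -> Lose adj q -> Win adj p
with Lose (T : finType) (adj : rel T) : position T -> Prop :=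
  | LoseAll p : (forall q, nim_move adj p q -> Win adj q) -> Lose adj p.

Definition unit_weighting (T : finType) (adj : rel T) : weighting T :=
  [ffun f : {set T} => if [exists u, exists v, adj u v && (f == [set u; v])]
                       then 1 else 0].

(* The hypercube Q_m: vertices are subsets of {1..m} (here 'I_m), adjacent
   iff they differ in exactly one element. *)
Definition hypercube_adj (m : nat) : rel {set 'I_m} :=
  fun X Y => #|(X :\: Y) :|: (Y :\: X)| == 1.

From mathcomp Require Import all_boot.
Set Implicit Arguments. Unset Strict Implicit. Unset Printing Implicit Defensive.

(* After the first player's opening move along a spoke from the empty set to
   some {i}, he keeps the game on the three lowest levels of the cube.  If the
   second player climbs from {i} to {i,j}, he answers along the twin edge
   {i,j}--{j}, so the edges {a}--{a,b} and {b}--{a,b} always carry equal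
   weights.  If the second player returns to the empty set, the number of used
   spokes becomes even while there are an odd number of them, so an unused
   spoke remains to leave along.  The first player thus always has a reply,
   and since every move lowers the total weight, the second player eventually
   gets stuck. *)

Section NimOnGraph.
Variables (T : finType) (adj : rel T).

Definition total_weight (w : weighting T) := \sum_(f : {set T}) w f.

Definition clear_edge (w : weighting T) (e : {set T}) : weighting T :=
  [ffun f => if f == e then 0 else w f].

Lemma clear_edge_le1 (w : weighting T) e :
  (forall f, w f <= 1) -> forall f, clear_edge w e f <= 1.
Proof. by move=> le1 f; rewrite ffunE; case: ifP. Qed.

Lemma unit_weighting_le1 f : unit_weighting adj f <= 1.
Proof. by rewrite ffunE; case: ifP. Qed.

Lemma unit_weighting_edge u v : adj u v -> unit_weighting adj [set u; v] = 1.
Proof.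
move=> uv; rewrite ffunE ifT //.
by apply/existsP; exists u; apply/existsP; exists v; rewrite uv eqxx.
Qed.

Lemma nim_move_total_weight (w w' : weighting T) v u :
  nim_move adj (w, v) (w', u) -> total_weight w' < total_weight w.
Proof.
case=> _ lt_e eq_f; rewrite /total_weight (bigD1 [set v; u]) //=.
rewrite [X in _ < X](bigD1 [set v; u]) //= (eq_bigr (fun f => w f)) ?ltn_add2r //.
Qed.

Lemma nim_move_clear (w : weighting T) v u : adj v u -> 0 < w [set v; u] ->
  nim_move adj (w, v) (clear_edge w [set v; u], u).
Proof.
by move=> vu w_pos; split=> [//||f /negbTE f_e]; rewrite ffunE ?eqxx ?f_e.
Qed.

Lemma nim_move_le1 (w w' : weighting T) v u :
    (forall f, w f <= 1) -> nim_move adj (w, v) (w', u) ->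
  w [set v; u] = 1 /\ w' = clear_edge w [set v; u].
Proof.
move=> le1 [_ lt_e eq_f].
have w_e : w [set v; u] = 1.
  by apply/eqP; rewrite eqn_leq le1; apply: leq_ltn_trans lt_e.
split=> //; apply/ffunP=> f; rewrite ffunE; case: eqP => [->|/eqP]; last exact: eq_f.
by move: lt_e; rewrite w_e ltnS leqn0 => /eqP.
Qed.

Lemma lose_of_reply (P : position T -> Prop) :
  (forall p q, P p -> nim_move adj p q -> exists2 r, nim_move adj q r & P r) ->
  forall p, P p -> Lose adj p.
Proof.
move=> reply; suff lose_lt N p : total_weight p.1 < N -> P p -> Lose adj p.
  by move=> p; apply: (lose_lt (total_weight p.1).+1).
elim: N p => // N IH [w v] /= lt_wN Pp; constructor=> -[w' u] pq.
have [[w'' u''] qr Pr] := reply _ _ Pp pq.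
have lt_w''N : total_weight w'' < N.
  apply: leq_trans (nim_move_total_weight qr) _.
  exact: leq_trans (ltnW (nim_move_total_weight pq)) lt_wN.
exact: WinMove qr (IH (w'', u'') lt_w''N Pr).
Qed.

End NimOnGraph.

Lemma set1_neq0 (T : finType) (a : T) : ([set a] == set0) = false.
Proof. by apply/negbTE/set0Pn; exists a; rewrite inE. Qed.

Lemma set2_neq0 (T : finType) (a b : T) : ([set a; b] == set0) = false.
Proof. by apply/negbTE/set0Pn; exists a; rewrite !inE eqxx. Qed.

Section Hypercube.
Variable m : nat.
Local Notation vertex := {set 'I_m}.
Local Notation adj := (@hypercube_adj m).

Lemma hypercube_adjP (X Y : vertex) :
  reflect (exists x, forall y, (y \in Y) = (y \in X) (+) (y == x)) (adj X Y).
Proof.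
apply: (iffP cards1P) => -[x XY].
  exists x => y; have : (y \in X :\: Y :|: Y :\: X) = (y \in [set x]) by rewrite XY.
  by rewrite !inE => <-; case: (y \in X); case: (y \in Y).
exists x; apply/setP=> z; rewrite !inE XY.
by case: (z \in X); case: (z == x).
Qed.

Lemma hypercube_adj0 k : adj set0 [set k].
Proof. by apply/hypercube_adjP; exists k => y; rewrite !inE. Qed.

Lemma hypercube_adj12 a b : a != b -> adj [set a] [set a; b].
Proof.
move=> ab; apply/hypercube_adjP; exists b => y; rewrite !inE.
by case: (eqVneq y a) => [->|]; [rewrite (negbTE ab) | case: (y == b)].
Qed.

Lemma hypercube_adj21 a b : a != b -> adj [set a; b] [set b].
Proof.
move=> ab; apply/hypercube_adjP; exists a => y; rewrite !inE.
by case: (eqVneq y a) => [->|]; [rewrite (negbTE ab) | case: (y == b)].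
Qed.

Lemma hypercube_adj1_cases i u :
  adj [set i] u -> u = set0 \/ exists2 j, i != j & u = [set i; j].
Proof.
case/hypercube_adjP=> x ux; case: (eqVneq x i) => [xi|xi]; first subst x.
  by left; apply/setP=> y; rewrite ux in_set1 addbb in_set0.
right; exists x; first by rewrite eq_sym.
apply/setP=> y; rewrite ux !inE.
by case: (eqVneq y i) => [->|] /=; [rewrite eq_sym xi | case: (y == x)].
Qed.

Definition spoke (k : 'I_m) : {set vertex} := [set set0; [set k]].
Definition rib (a b : 'I_m) : {set vertex} := [set [set a]; [set a; b]].

Lemma spoke_inj : injective spoke.
Proof.
move=> j k jk; have : [set j] \in spoke k by rewrite -jk !inE eqxx orbT.
by rewrite !inE set1_neq0 => /eqP/set1_inj.
Qed.

Lemma spoke_neq_rib k a b : spoke k != rib a b.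
Proof.
apply/eqP=> kab; have : set0 \in rib a b by rewrite -kab !inE eqxx.
by rewrite !inE ![set0 == _]eq_sym set1_neq0 set2_neq0.
Qed.

(* [rib a b] is the Kuratowski pair of [a] and [b]. *)
Lemma rib_eq a b c d : (rib a b == rib c d) = (a == c) && (b == d).
Proof.
apply/eqP/andP=> [abcd | [/eqP-> /eqP->] //].
have ac : a = c.
  have : [set a] \in rib c d by rewrite -abcd !inE eqxx.
  case/set2P=> [/set1_inj // | acd].
  have : c \in [set a] by rewrite acd !inE eqxx.
  by rewrite inE => /eqP.
rewrite -ac in abcd *; split=> //.
have mem x y : rib a x = rib a y -> x \in [set a; y].
  move=> xy; have : [set a; x] \in rib a y by rewrite -xy !inE eqxx orbT.
  case/set2P=> axy; last by rewrite -axy !inE eqxx orbT.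
  have : x \in [set a] by rewrite -axy !inE eqxx orbT.
  by rewrite !inE => ->.
move: (mem _ _ abcd) (mem _ _ (esym abcd)); rewrite !inE.
by case/orP=> /eqP-> //; case/orP=> /eqP->.
Qed.

Definition used_spokes (w : weighting vertex) := [set k | w (spoke k) == 0].

Definition paired (w : weighting vertex) := forall a b, w (rib a b) = w (rib b a).

Definition cube_inv (w : weighting vertex) :=
  [/\ forall f, w f <= 1, paired w & odd #|used_spokes w|].

Definition cube_position (p : position vertex) :=
  cube_inv p.1 /\ exists i, p.2 = [set i].

Lemma used_spokes_clear_spoke w k :
  used_spokes (clear_edge w (spoke k)) = k |: used_spokes w.
Proof.
apply/setP=> j; rewrite !inE ffunE (inj_eq spoke_inj).
by case: (eqVneq j k).
Qed.

Lemma used_spokes_clear_rib w a b : used_spokes (clear_edge w (rib a b)) = used_spokes w.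
Proof. by apply/setP=> j; rewrite !inE ffunE (negbTE (spoke_neq_rib _ _ _)). Qed.

Lemma paired_clear_spoke w k : paired w -> paired (clear_edge w (spoke k)).
Proof.
move=> pw a b; rewrite !ffunE ![rib _ _ == _]eq_sym.
by rewrite !(negbTE (spoke_neq_rib _ _ _)).
Qed.

Lemma paired_clear_ribs w a b :
  paired w -> paired (clear_edge (clear_edge w (rib a b)) (rib b a)).
Proof.
move=> pw x y; rewrite !ffunE !rib_eq (pw x y).
rewrite [(y == b) && _]andbC [(y == a) && _]andbC.
by case: ((x == b) && (y == a)); case: ((x == a) && (y == b)).
Qed.

Lemma reply_at_set0 w i : odd m -> cube_inv w -> w (spoke i) = 1 ->
  exists2 r, nim_move adj (clear_edge w (spoke i), set0) r & cube_position r.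
Proof.
move=> odd_m inv_w w_i; have [le1 pw odd_used] := inv_w.
set w' := clear_edge w (spoke i).
have card_used' : #|used_spokes w'| = (#|used_spokes w|).+1.
  by rewrite used_spokes_clear_spoke cardsU1 inE w_i.
have /subsetPn[k _ unused_k] : ~~ ([set: 'I_m] \subset used_spokes w').
  rewrite subTset; apply: contraTN odd_m => /eqP used_T.
  by rewrite -(card_ord m) -cardsT -used_T card_used' /= odd_used.
exists (clear_edge w' (spoke k), [set k]).
  apply: nim_move_clear (hypercube_adj0 k) _.
  by rewrite lt0n; move: unused_k; rewrite inE.
split; last by exists k.
split; first exact/clear_edge_le1/clear_edge_le1.
  exact/paired_clear_spoke/paired_clear_spoke.
by rewrite used_spokes_clear_spoke cardsU1 unused_k card_used' /= odd_used.
Qed.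

Lemma reply_at_pair w i j : i != j -> cube_inv w -> w (rib i j) = 1 ->
  exists2 r, nim_move adj (clear_edge w (rib i j), [set i; j]) r & cube_position r.
Proof.
move=> ij inv_w w_ij; have [le1 pw odd_used] := inv_w.
set w' := clear_edge w (rib i j).
have w'_ji : w' (rib j i) = 1 by rewrite ffunE rib_eq eq_sym (negbTE ij) -pw.
exists (clear_edge w' (rib j i), [set j]).
  have e_ji : [set [set i; j]; [set j]] = rib j i by rewrite /rib setUC (setUC [set i]).
  by rewrite -e_ji; apply: nim_move_clear (hypercube_adj21 ij) _; rewrite e_ji w'_ji.
split; last by exists j.
split; first exact/clear_edge_le1/clear_edge_le1.
  exact: paired_clear_ribs.
by rewrite !used_spokes_clear_rib.
Qed.

Lemma cube_reply : odd m -> forall p q, cube_position p -> nim_move adj p q ->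
  exists2 r, nim_move adj q r & cube_position r.
Proof.
move=> odd_m [w v] [w' u] [/= inv_w [i /= ->]] move_iu.
have [le1 _ _] := inv_w; have [iu _ _] := move_iu.
have [+ ->] := nim_move_le1 le1 move_iu.
case: (hypercube_adj1_cases iu) => [-> | [j ij ->]] w_e.
  have e_i : [set [set i]; set0] = spoke i by rewrite /spoke setUC.
  by rewrite e_i in w_e *; apply: reply_at_set0.
exact: reply_at_pair.
Qed.

Lemma cube_inv_start i : cube_inv (clear_edge (unit_weighting adj) (spoke i)).
Proof.
have used0 : used_spokes (unit_weighting adj) = set0.
  by apply/setP=> k; rewrite !inE unit_weighting_edge // hypercube_adj0.
split.
- exact/clear_edge_le1/unit_weighting_le1.
- apply: paired_clear_spoke => a b; case: (eqVneq a b) => [-> // | ab].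
  by rewrite !unit_weighting_edge ?hypercube_adj12 // eq_sym.
- by rewrite used_spokes_clear_spoke used0 setU0 cards1.
Qed.

Lemma hypercube_unit_win : odd m -> Win adj (unit_weighting adj, set0).
Proof.
move=> odd_m; pose i : 'I_m := Ordinal (odd_gt0 odd_m).
have w_i : 0 < unit_weighting adj (spoke i).
  by rewrite unit_weighting_edge ?hypercube_adj0.
apply: WinMove (nim_move_clear (hypercube_adj0 i) w_i) _.
apply: lose_of_reply (cube_reply odd_m) _ _.
by split; [exact: cube_inv_start | exists i].
Qed.

End Hypercube.

(* The argument works for every odd dimension. *)
Theorem mainTheorem2 (n : nat) (hn : 1 <= n) :
  Win (@hypercube_adj (2 * n + 1))
      (unit_weighting (@hypercube_adj (2 * n + 1)), set0).
Proof. by apply: hypercube_unit_win; rewrite addn1 /= oddM. Qed.
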